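(* Let $\alpha>1$, $\varepsilon>0$, $\delta\in(0,1)$, and let $\pi^*$ be the function defined by $\pi^*(0)=0$, $\pi^*(n)=L(\pi^*(n-1))$ for $n>0$, where $L(q)=\max\{p\in[q,1]: D^\delta_\alpha(\mathrm{Ber}(p)\|\mathrm{Ber}(q))\le\varepsilon \text{ and } D^\delta_\alpha(\mathrm{Ber}(q)\|\mathrm{Ber}(p))\le\varepsilon\}$. Suppose $\pi^*(2) > 3\,\pi^*(1)$. Then, for the universe $U=\{1,2\}$, there is no optimal partition selection mechanism for $(\delta,\alpha,\varepsilon)$-RDP with $\Delta_1 = 2$; that is, there is no partition selection mechanism $M^*$ that is $(\delta,\alpha,\varepsilon)$-RDP for $\Delta_1=2$ such that $\mathbb{E}[|M^*(X)|]\ge\mathbb{E}[|M(X)|]$ for every dataset $X$ and every partition selection mechanism $M$ that is $(\delta,\alpha,\varepsilon)$-RDP for $\Delta_1 = 2$.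
   Context: $\mathrm{Ber}(p)$: Bernoulli distribution. For $\alpha>1$, $D_\alpha(P\|Q)=\frac{1}{\alpha-1}\log\sum_x P(x)^\alpha Q(x)^{1-\alpha}$ and $D^\delta_\alpha(P\|Q)=\inf\{D_\alpha(P'\|Q'): P=(1-\delta)P'+\delta P'',\ Q=(1-\delta)Q'+\delta Q''\}$ over probability distributions. A randomized algorithm $M$ is $(\delta,\alpha,\varepsilon)$-RDP w.r.t. a neighboring relation if $D^\delta_\alpha(M(X)\|M(X'))\le\varepsilon$ for all neighbors $X,X'$ (both orders). Datasets are $X\in\mathbb{Z}_{\ge0}^U$; $X, X'$ are neighbors for $\Delta_1=\Delta$ if $\|X-X'\|_1\le\Delta$. A partition selection mechanism is a randomized map $M$ from datasets to subsets of $U$ with $M(X)\subseteq\{u: X_u>0\}$ always. *)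

From HB Require Import structures.
From mathcomp Require Import all_boot all_order all_algebra.
From mathcomp Require Import all_classical all_reals all_analysis.
Set Implicit Arguments. Unset Strict Implicit. Unset Printing Implicit Defensive.
Import Order.TTheory GRing.Theory Num.Theory.
Local Open Scope classical_set_scope.
Local Open Scope ring_scope.

Section Defs.
Variable R : realType.

Definition is_distr (T : finType) (P : T -> R) : Prop :=
  (forall x, 0 <= P x) /\ \sum_(x : T) P x = 1.

Definition Ber (p : R) : bool -> R := fun b => if b then p else 1 - p.

(* Renyi divergence of order a, with the standard conventions:
   +oo if P is not absolutely continuous w.r.t. Q, and terms with
   Q x = 0 = P x contribute 0. *)
Definition renyi (T : finType) (a : R) (P Q : T -> R) : \bar R :=
  if [exists x, (P x != 0) && (Q x == 0)] then +oo%E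
  else ((a - 1)^-1 * ln (\sum_(x | Q x != 0) P x `^ a * Q x `^ (1 - a)))%:E.

Definition renyi_delta (T : finType) (delta a : R) (P Q : T -> R) : \bar R :=
  ereal_inf [set d | exists P' P'' Q' Q'' : T -> R,
    [/\ is_distr P', is_distr P'', is_distr Q', is_distr Q'' &
        [/\ (forall x, P x = (1 - delta) * P' x + delta * P'' x),
             (forall x, Q x = (1 - delta) * Q' x + delta * Q'' x) &
             d = renyi a P' Q']]].

Definition Lset (delta a eps q : R) : set R :=
  [set p | q <= p <= 1 /\
     (renyi_delta delta a (Ber p) (Ber q) <= eps%:E)%E /\
     (renyi_delta delta a (Ber q) (Ber p) <= eps%:E)%E].

Definition is_max (S : set R) (p : R) : Prop := S p /\ (forall p', S p' -> p' <= p).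

Variable U : finType.
Definition dataset := U -> nat.

Definition l1_dist (X X' : dataset) : nat :=
  \sum_(u : U) ((X u - X' u) + (X' u - X u))%N.
Definition neighbors (Delta : nat) (X X' : dataset) : Prop := (l1_dist X X' <= Delta)%N.

(* A randomized map from datasets to subsets of U: M X S = Pr[M(X) = S]. *)
Definition mechanism := dataset -> {set U} -> R.

Definition is_partition_selection (M : mechanism) : Prop :=
  forall X, is_distr (M X) /\
    (forall S, M X S != 0 -> S \subset [set u | (0 < X u)%N]).

Definition is_RDP (delta a eps : R) (Delta : nat) (M : mechanism) : Prop :=
  forall X X', neighbors Delta X X' ->
    (renyi_delta delta a (M X) (M X') <= eps%:E)%E /\
    (renyi_delta delta a (M X') (M X) <= eps%:E)%E.

Definition expected_size (M : mechanism) (X : dataset) : R :=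
  \sum_(S : {set U}) M X S * #|S|%:R.

End Defs.

(* The universe is {u1, u2} = {ord0, ord_max}.  A delta-approximate Renyi divergence
   D^delta(P || Q) can only be finite if every Q-null event has P-mass at most delta; and
   delta <= pi 1, because Ber delta is a delta-mixture around Ber 0.  Suppose M is optimal.
   Comparing with the mechanism that outputs U with probability pi 1 when both counts are
   positive gives E|M(1,1)| >= 2 pi 1 >= 2 delta, while M(0,0) always outputs the empty set, so
   at most delta of the mass of M(1,1) is on nonempty sets: all of it is on U, and M(1,1) never
   outputs {u1}.  Then the neighbours (1,1) and (3,0) of (3,1) bound Pr[M(3,1) = {u1}] and
   Pr[u2 in M(3,1)] by delta, so E|M(3,1)| <= 3 delta <= 3 pi 1 < pi 2, which the mechanism
   outputting {u1} with probability pi(ceil(X u1 / 2)) attains. *)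

From HB Require Import structures.
From mathcomp Require Import all_boot all_order all_algebra.
From mathcomp Require Import all_classical all_reals all_analysis.
From mathcomp Require Import lra zify.
(* Re-imported so that set0, [set: _] and inE refer to finite sets, not classical ones. *)
From mathcomp Require Import finset.
Import Order.TTheory GRing.Theory Num.Theory.
Set Implicit Arguments. Unset Strict Implicit. Unset Printing Implicit Defensive.
Local Open Scope ring_scope.

Section RenyiDivergence.
Variables (R : realType) (T : finType).
Implicit Types (P Q : T -> R) (delta a : R).

Lemma renyi_self a P : is_distr P -> renyi a P P = 0%:E.
Proof.
move=> [P_ge0 P_sum1]; rewrite /renyi.
have -> : [exists x, (P x != 0) && (P x == 0)] = false.
  by apply/negbTE/existsPn => x; case: (P x == 0).
congr (_%:E).
rewrite (eq_bigr P); last first.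
  move=> x Px; rewrite -powRD; last by rewrite Px implybT.
  by rewrite addrC subrK powRr1.
rewrite big_mkcond /= (eq_bigr P) ?P_sum1 ?ln1 ?mulr0 // => x _.
by case: eqP.
Qed.

Lemma renyi_delta_common_component_le0 delta a P Q P' P'' Q'' :
  is_distr P' -> is_distr P'' -> is_distr Q'' ->
  (forall x, P x = (1 - delta) * P' x + delta * P'' x) ->
  (forall x, Q x = (1 - delta) * P' x + delta * Q'' x) ->
  (renyi_delta delta a P Q <= 0%:E)%E.
Proof.
move=> dP' dP'' dQ'' eP eQ; rewrite -(renyi_self a dP').
by apply: ereal_inf_lbound; exists P', P'', P', Q''.
Qed.

Lemma renyi_delta_self_le0 delta a P : is_distr P -> (renyi_delta delta a P P <= 0%:E)%E.
Proof.
move=> dP; apply: (renyi_delta_common_component_le0 a dP dP dP) => x;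
  by rewrite -mulrDl subrK mul1r.
Qed.

(* Finite divergence of the decomposition forces P' << Q'; as 1 - delta > 0,
   Q' vanishes on a Q-null event, hence so does P', and only delta * P'' is left. *)
Lemma renyi_delta_null_event delta a P Q (A : pred T) :
  0 < delta < 1 -> (renyi_delta delta a P Q < +oo)%E ->
  (forall x, A x -> Q x = 0) -> \sum_(x | A x) P x <= delta.
Proof.
move=> /andP[delta_gt0 delta_lt1] /ereal_inf_lt
  [_ [P' [P'' [Q' [Q'' [_ [P''_ge0 P''_sum1] [Q'_ge0 _] [Q''_ge0 _] [eP eQ ->]]]]]] fin]
  QA.
have abs_cont x : Q' x = 0 -> P' x = 0.
  move=> Q'x; apply/eqP; apply: contraTT fin => P'x.
  by rewrite /renyi; case: existsP => // -[]; exists x; rewrite P'x Q'x eqxx.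
have PA x : A x -> P x = delta * P'' x.
  move=> Ax; rewrite eP abs_cont ?mulr0 ?add0r //; apply/eqP; rewrite eq_le Q'_ge0 andbT.
  have : (1 - delta) * Q' x <= 0.
    by rewrite -(QA x Ax) eQ lerDl mulr_ge0 // ltW.
  by rewrite pmulr_rle0 // subr_gt0.
rewrite (eq_bigr _ PA) -mulr_sumr ler_piMr ?(ltW delta_gt0) //.
by rewrite -P''_sum1 [leRHS](bigID A) /= lerDl sumr_ge0.
Qed.

End RenyiDivergence.

Section BoolLift.
Variables (R : realType) (T : finType) (x1 x0 : T).
Hypothesis x10 : x1 != x0.

Definition lift_bool (F : bool -> R) : T -> R :=
  fun t => if t == x1 then F true else if t == x0 then F false else 0.

Lemma lift_bool1 F : lift_bool F x1 = F true.
Proof. by rewrite /lift_bool eqxx. Qed.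

Lemma lift_bool0 F : lift_bool F x0 = F false.
Proof. by rewrite /lift_bool eq_sym (negbTE x10) eqxx. Qed.

Lemma lift_bool_out F t : t != x1 -> t != x0 -> lift_bool F t = 0.
Proof. by rewrite /lift_bool => /negbTE-> /negbTE->. Qed.

Lemma sum_supp2 (h : T -> R) :
  (forall t, t != x1 -> t != x0 -> h t = 0) -> \sum_t h t = h x1 + h x0.
Proof.
move=> h_out; rewrite (bigD1 x1) // (bigD1 x0) /=; last by rewrite eq_sym.
by rewrite big1 ?addr0 // => t /andP[]; apply: h_out.
Qed.

Lemma sum_lift_bool (h : T -> R) F :
  \sum_t lift_bool F t * h t = F true * h x1 + F false * h x0.
Proof.
rewrite (sum_supp2 (h := fun t => lift_bool F t * h t)) ?lift_bool1 ?lift_bool0 //.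
by move=> t t1 t0; rewrite lift_bool_out ?mul0r.
Qed.

Lemma lift_bool_distr F : is_distr F -> is_distr (lift_bool F).
Proof.
move=> [F_ge0 F_sum1]; split.
  by move=> t; rewrite /lift_bool; case: ifP => _ //; case: ifP.
have := sum_lift_bool (fun=> 1) F; rewrite !mulr1 -big_bool F_sum1 => <-.
by apply: eq_bigr => t _; rewrite mulr1.
Qed.

Lemma renyi_lift_bool a F G : renyi a (lift_bool F) (lift_bool G) = renyi a F G.
Proof.
rewrite /renyi.
have -> : [exists t, (lift_bool F t != 0) && (lift_bool G t == 0)] =
          [exists b, (F b != 0) && (G b == 0)].
  apply/existsP/existsP => [[t]|[[] hb]].
  - rewrite /lift_bool; case: ifP => _; first by exists true.
    by case: ifP => _; [exists false | rewrite eqxx].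
  - by exists x1; rewrite !lift_bool1.
  - by exists x0; rewrite !lift_bool0.
case: ifP => // _; congr ((_ * ln _)%:E).
rewrite [LHS]big_mkcond [RHS]big_mkcond big_bool /= sum_supp2 ?lift_bool1 ?lift_bool0 //.
by move=> t t1 t0; rewrite !lift_bool_out ?eqxx.
Qed.

Lemma renyi_delta_lift_bool_le delta a F G :
  (renyi_delta delta a (lift_bool F) (lift_bool G) <= renyi_delta delta a F G)%E.
Proof.
apply: ereal_inf_le_tmp => _ [F' [F'' [G' [G'' [dF' dF'' dG' dG'' [eF eG ->]]]]]].
exists (lift_bool F'), (lift_bool F''), (lift_bool G'), (lift_bool G'').
split; [exact: lift_bool_distr..|split; last by rewrite renyi_lift_bool];
  by move=> t; rewrite /lift_bool; case: ifP => _; [|case: ifP => _];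
     rewrite ?eF ?eG ?mulr0 ?addr0.
Qed.

End BoolLift.

Section BoolMechanism.
Variables (R : realType) (U : finType).

Definition Ber_close (delta a eps p q : R) : Prop :=
  (renyi_delta delta a (Ber p) (Ber q) <= eps%:E)%E /\
  (renyi_delta delta a (Ber q) (Ber p) <= eps%:E)%E.

Lemma Ber_distr (p : R) : 0 <= p <= 1 -> is_distr (Ber p).
Proof.
move=> /andP[p_ge0 p_le1]; split; first by case => /=; rewrite ?subr_ge0.
by rewrite big_bool /= addrC subrK.
Qed.

Lemma Ber_close_refl delta a eps p :
  0 <= eps -> 0 <= p <= 1 -> Ber_close delta a eps p p.
Proof.
move=> eps_ge0 /Ber_distr /(renyi_delta_self_le0 delta a) self_le0.
by split; apply: le_trans self_le0 _; rewrite lee_fin.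
Qed.

Lemma Ber_close_sym delta a eps p q :
  Ber_close delta a eps p q -> Ber_close delta a eps q p.
Proof. by case. Qed.

Definition bool_mech (S : {set U}) (f : dataset U -> R) : mechanism R U :=
  fun X => lift_bool S set0 (Ber (f X)).

Variables (S : {set U}) (f : dataset U -> R).
Hypothesis S_neq0 : S != set0.

Lemma bool_mech_partition_selection :
  (forall X, 0 <= f X <= 1) ->
  (forall X, f X != 0 -> S \subset [set u | (0 < X u)%N]%classic) ->
  is_partition_selection (bool_mech S f).
Proof.
move=> f01 f_supp X; split; first exact/lift_bool_distr/Ber_distr.
move=> S'; rewrite /bool_mech.
have [->|S'S] := eqVneq S' S; first by rewrite lift_bool1; apply: f_supp.
have [-> _|S'0] := eqVneq S' set0; first by apply/fintype.subsetP => u; rewrite inE.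
by rewrite lift_bool_out ?eqxx.
Qed.

Lemma bool_mech_RDP delta a eps Delta :
  (forall X X', neighbors Delta X X' -> Ber_close delta a eps (f X) (f X')) ->
  is_RDP delta a eps Delta (bool_mech S f).
Proof.
by move=> f_close X X' /f_close[close close']; split;
  apply: le_trans (renyi_delta_lift_bool_le _ _ _ _ _) _.
Qed.

Lemma expected_size_bool_mech X : expected_size (bool_mech S f) X = f X * #|S|%:R.
Proof. by rewrite /expected_size /bool_mech sum_lift_bool //= cards0 mulr0 addr0. Qed.

End BoolMechanism.

Lemma neighbors_coord (U : finType) Delta (X X' : dataset U) u :
  neighbors Delta X X' -> (X u - X' u + (X' u - X u) <= Delta)%N.
Proof. by apply: leq_trans; rewrite /l1_dist (bigD1 u) //= leq_addr. Qed.

Section PartitionSelection.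
Variables (R : realType) (U : finType) (M : mechanism R U).

Lemma partition_selection_null X (S : {set U}) u :
  is_partition_selection M -> u \in S -> X u = 0%N -> M X S = 0.
Proof.
move=> /(_ X)[_ supp] uS Xu; apply/eqP/negP.
by move=> /negP/supp/fintype.subsetP/(_ u uS)/set_mem /=; rewrite Xu.
Qed.

Lemma RDP_null_event_mass delta a eps Delta X X' (A : pred {set U}) :
  0 < delta < 1 -> is_RDP delta a eps Delta M -> neighbors Delta X X' ->
  (forall S, A S -> M X' S = 0) -> \sum_(S | A S) M X S <= delta.
Proof.
move=> delta01 rdpM /rdpM[le_eps _]; apply: renyi_delta_null_event delta01 _.
by apply: le_lt_trans le_eps _; rewrite ltry.
Qed.

End PartitionSelection.

Section Staircase.
Variables (R : realType) (delta a eps : R) (pi : nat -> R).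
Hypotheses (eps_gt0 : 0 < eps) (pi0 : pi 0%N = 0)
  (pi_max : forall n, is_max (Lset delta a eps (pi n)) (pi n.+1)).

Lemma pi_step n : pi n <= pi n.+1 <= 1 /\ Ber_close delta a eps (pi n.+1) (pi n).
Proof. by have [[? []]] := pi_max n. Qed.

Lemma pi01 n : 0 <= pi n <= 1.
Proof.
elim: n => [|n /andP[pi_ge0 _]]; first by rewrite pi0 lexx ler01.
by have [/andP[pi_le pi_le1] _] := pi_step n; rewrite pi_le1 (le_trans pi_ge0 pi_le).
Qed.

Lemma Ber_close_pi k k' :
  (k' <= k.+1)%N -> (k <= k'.+1)%N -> Ber_close delta a eps (pi k) (pi k').
Proof.
move=> le_k' le_k; case: (ltngtP k k') => [lt_kk'|lt_k'k|->].
- have -> : k' = k.+1 by lia.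
  exact/Ber_close_sym/(pi_step k).2.
- have -> : k = k'.+1 by lia.
  exact: (pi_step k').2.
- exact: Ber_close_refl (ltW eps_gt0) (pi01 k').
Qed.

(* Ber delta = (1 - delta) Ber 0 + delta Ber 1 shares its main component with Ber 0. *)
Lemma delta_le_pi1 : 0 <= delta <= 1 -> delta <= pi 1%N.
Proof.
move=> delta01; apply: (pi_max 0%N).2; rewrite pi0; split=> //.
have Ber0 : is_distr (Ber (0 : R)) by apply: Ber_distr; rewrite lexx ler01.
have Ber1 : is_distr (Ber (1 : R)) by apply: Ber_distr; rewrite lexx ler01.
have Ber_delta b : Ber delta b = (1 - delta) * Ber 0 b + delta * Ber 1 b.
  by case: b => /=; lra.
have Ber_0 b : Ber 0 b = (1 - delta) * Ber 0 b + delta * Ber 0 b.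
  by rewrite -mulrDl subrK mul1r.
have eps_ge0 : (0%:E <= eps%:E)%E by rewrite lee_fin ltW.
split; apply: le_trans eps_ge0.
- exact: (renyi_delta_common_component_le0 a Ber0 Ber1 Ber0).
- exact: (renyi_delta_common_component_le0 a Ber0 Ber0 Ber1).
Qed.

Section StaircaseMechanisms.
Variables (U : finType) (u0 : U).

Definition full_mech : mechanism R U :=
  bool_mech [set: U] (fun X => pi [forall u, (0 < X u)%N]).

(* The paper's mechanism pi*(ceil (X u0 / Delta)) for Delta = 2, on the single partition u0. *)
Definition single_mech : mechanism R U :=
  bool_mech [set u0] (fun X => pi (uphalf (X u0))).

Lemma setT_neq0 : [set: U] != set0.
Proof. by apply/set0Pn; exists u0. Qed.

Lemma set1_neq0 : [set u0] != set0.
Proof. by apply/set0Pn; exists u0; rewrite inE. Qed.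

Lemma full_mech_partition_selection : is_partition_selection full_mech.
Proof.
apply: bool_mech_partition_selection setT_neq0 _ _ => [X|X]; first exact: pi01.
case: forallP => [X_gt0 _|_]; last by rewrite pi0 eqxx.
by apply/fintype.subsetP => u _; rewrite in_setE; apply: X_gt0.
Qed.

Lemma full_mech_RDP Delta : is_RDP delta a eps Delta full_mech.
Proof.
apply: (bool_mech_RDP setT_neq0) => X X' _ /=.
by apply: Ber_close_pi; case: [forall u, _]; case: [forall u, _].
Qed.

Lemma single_mech_partition_selection : is_partition_selection single_mech.
Proof.
apply: bool_mech_partition_selection set1_neq0 _ _ => [X|X]; first exact: pi01.
case: (posnP (X u0)) => [->|X_gt0 _]; first by rewrite pi0 eqxx.
by apply/fintype.subsetP => u /set1P->; rewrite in_setE.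
Qed.

Lemma single_mech_RDP : is_RDP delta a eps 2 single_mech.
Proof.
apply: (bool_mech_RDP set1_neq0) => X X' /(neighbors_coord u0) near /=.
by apply: Ber_close_pi; lia.
Qed.

End StaircaseMechanisms.
End Staircase.

Definition data2 (x y : nat) : dataset 'I_2 := fun i => if i == ord0 then x else y.

Lemma l1_dist_data2 x y x' y' :
  l1_dist (data2 x y) (data2 x' y') = (x - x' + (x' - x) + ((y - y') + (y' - y)))%N.
Proof. by rewrite /l1_dist !big_ord_recl big_ord0 addn0. Qed.

Lemma set_I2_eqE (A B : {set 'I_2}) :
  (A == B) = ((ord0 \in A) == (ord0 \in B)) && ((ord_max \in A) == (ord_max \in B)).
Proof.
apply/eqP/andP => [->|[/eqP eq0 /eqP eq1]]; first by rewrite !eqxx.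
apply/setP => -[[|[|i]] lti] //.
- by rewrite (_ : Ordinal lti = ord0) //; apply: val_inj.
- by rewrite (_ : Ordinal lti = ord_max) //; apply: val_inj.
Qed.

Lemma sum_set_I2 (R : realType) (F : {set 'I_2} -> R) :
  \sum_S F S = F set0 + F [set ord0] + F [set ord_max] + F [set: 'I_2].
Proof.
rewrite (bigD1 set0) //= (bigD1 [set ord0]) /=; last by rewrite set_I2_eqE !inE.
rewrite (bigD1 [set ord_max]) /=; last by rewrite !set_I2_eqE !inE.
rewrite (bigD1 [set: 'I_2]) /=; last by rewrite !set_I2_eqE !inE.
rewrite big_pred0 ?addr0 ?addrA // => S; rewrite !set_I2_eqE !inE /=.
by case: (ord0 \in S); case: (ord_max \in S).
Qed.

Section TwoElementUniverse.
Variables (R : realType) (delta a eps : R) (M : mechanism R 'I_2).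
Hypotheses (delta01 : 0 < delta < 1) (psM : is_partition_selection M)
  (rdpM : is_RDP delta a eps 2 M).

Lemma expected_size_I2 X :
  expected_size M X = M X [set ord0] + M X [set ord_max] + 2 * M X [set: 'I_2].
Proof.
rewrite /expected_size sum_set_I2 cards0 !cards1 cardsT card_ord; lra.
Qed.

Lemma expected_size_data31_le :
  2 * delta <= expected_size M (data2 1 1) -> expected_size M (data2 3 1) <= 3 * delta.
Proof.
rewrite !expected_size_I2 => size11.
have M_ge0 X S : 0 <= M X S by have [[]] := psM X.
have null_at X (S : {set 'I_2}) u : u \in S -> X u = 0%N -> M X S = 0.
  exact: partition_selection_null psM.
have nonempty11 : M (data2 1 1) [set ord0] + M (data2 1 1) [set ord_max] +
                  M (data2 1 1) [set: 'I_2] <= delta.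
  have := RDP_null_event_mass (X := data2 1 1) (X' := data2 0 0)
            (A := fun S => (ord0 \in S) || (ord_max \in S)) delta01 rdpM.
  rewrite big_mkcond sum_set_I2 !inE /= add0r.
  apply; first by rewrite /neighbors l1_dist_data2.
  by move=> S /orP[] /null_at->.
have single11 : M (data2 1 1) [set ord0] = 0.
  move: (M_ge0 (data2 1 1) [set ord0]) (M_ge0 (data2 1 1) [set ord_max]); lra.
have single31 : M (data2 3 1) [set ord0] <= delta.
  have := RDP_null_event_mass (X := data2 3 1) (X' := data2 1 1)
            (A := fun S => S == [set ord0]) delta01 rdpM.
  rewrite big_pred1_eq.
  apply; first by rewrite /neighbors l1_dist_data2.
  by move=> S /eqP->.
have second31 : M (data2 3 1) [set ord_max] + M (data2 3 1) [set: 'I_2] <= delta.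
  have := RDP_null_event_mass (X := data2 3 1) (X' := data2 3 0)
            (A := fun S => ord_max \in S) delta01 rdpM.
  rewrite big_mkcond sum_set_I2 !inE /= !add0r.
  apply; first by rewrite /neighbors l1_dist_data2.
  by move=> S /null_at->.
move: (M_ge0 (data2 3 1) [set ord_max]) (M_ge0 (data2 3 1) [set: 'I_2]); lra.
Qed.

End TwoElementUniverse.

Theorem mainTheorem4 (R : realType) (a eps delta : R) (pi : nat -> R) :
  1 < a -> 0 < eps -> 0 < delta < 1 ->
  pi 0%N = 0 ->
  (forall n : nat, is_max (Lset delta a eps (pi n)) (pi n.+1)) ->
  pi 2%N > 3 * pi 1%N ->
  ~ exists Mstar : mechanism R 'I_2,
      [/\ is_partition_selection Mstar,
          is_RDP delta a eps 2 Mstar &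
          forall M : mechanism R 'I_2,
            is_partition_selection M -> is_RDP delta a eps 2 M ->
            forall X : dataset 'I_2, expected_size M X <= expected_size Mstar X].
Proof.
move=> _ eps_gt0 delta01 pi0 pi_max pi2_gt [M [psM rdpM M_opt]].
have delta_pi1 : delta <= pi 1%N.
  by apply: (delta_le_pi1 eps_gt0 pi0 pi_max); case/andP: delta01 => /ltW-> /ltW->.
have size11 : 2 * delta <= expected_size M (data2 1 1).
  have := M_opt _ (full_mech_partition_selection pi0 pi_max ord0)
                  (full_mech_RDP (Delta := 2) eps_gt0 pi0 pi_max ord0) (data2 1 1).
  rewrite expected_size_bool_mech ?(setT_neq0 ord0) //= cardsT card_ord.
  have -> : [forall u, 0 < data2 1 1 u]%N by apply/forallP => u; rewrite /data2; case: ifP.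
  lra.
have size31 : pi 2%N <= expected_size M (data2 3 1).
  have := M_opt _ (single_mech_partition_selection pi0 pi_max ord0)
                  (single_mech_RDP eps_gt0 pi0 pi_max ord0) (data2 3 1).
  by rewrite expected_size_bool_mech ?set1_neq0 // cards1 mulr1.
have := expected_size_data31_le delta01 psM rdpM size11.
lra.
Qed.
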